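(* Let $n=2k$ with $k\ge 2$. If $lmd(S_n)=2$, then no local metric basis $W$ of $S_n$ consists of one vertex of $C_i$ and one vertex of $C_j$ with $i\neq j$, $i,j\in\{a,b,c,d\}$.
   Context: For $n\ge 3$, $S_n$ is the graph with vertex set $\{a_i,b_i,c_i,d_i : 1\le i\le n\}$ and edge set $\{a_ia_{i+1}, b_ib_{i+1}, c_ic_{i+1}, d_id_{i+1}, a_{i+1}b_i, a_ib_i, b_ic_i, c_id_i : 1\le i\le n\}$, indices taken modulo $n$. For $i\in\{a,b,c,d\}$, $C_i$ is the cycle induced by $i_1,\ldots,i_n$. A vertex $w$ resolves $u,v$ if $d(u,w)\neq d(v,w)$ ($d$ the graph distance). A local resolving set is a vertex set $W$ such that every two adjacent vertices are resolved by some element of $W$; a local metric basis is a local resolving set of minimum cardinality, and $lmd(G)$ is that cardinality. *)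

From mathcomp Require Import all_boot.
Set Implicit Arguments. Unset Strict Implicit. Unset Printing Implicit Defensive.

(* Vertices of S_n: (l, i) with l : 'I_4 encoding the cycle letter
   (0 = a, 1 = b, 2 = c, 3 = d) and i : 'I_n the 0-based index (mod n). *)
Notation SV n := (ordinal 4 * ordinal n)%type.

Definition Sedge (n : nat) (x y : SV n) : bool :=
  let: (lx, ix) := x in let: (ly, iy) := y in
  [|| (lx == ly) && (nat_of_ord iy == (ix.+1) %% n)
    , [&& nat_of_ord lx == 0, nat_of_ord ly == 1 & nat_of_ord ix == (iy.+1) %% n]
    , [&& nat_of_ord lx == 0, nat_of_ord ly == 1 & ix == iy]
    , [&& nat_of_ord lx == 1, nat_of_ord ly == 2 & ix == iy]
    | [&& nat_of_ord lx == 2, nat_of_ord ly == 3 & ix == iy] ].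

Definition Sadj (n : nat) (x y : SV n) : bool := Sedge x y || Sedge y x.

Fixpoint walk (n : nat) (k : nat) (u v : SV n) : bool :=
  match k with
  | 0 => u == v
  | k'.+1 => [exists w : SV n, walk k' u w && Sadj w v]
  end.

(* graph distance: least k with a walk of length k (S_n is connected, so
   this is attained below #|{: SV n}|) *)
Definition Sdist (n : nat) (u v : SV n) : nat :=
  find (fun k => walk k u v) (iota 0 #|{: SV n}|).

Definition resolves (n : nat) (w u v : SV n) : bool := Sdist u w != Sdist v w.

Definition local_resolving (n : nat) (W : {set SV n}) : bool :=
  [forall u : SV n, forall v : SV n,
     Sadj u v ==> [exists w in W, resolves w u v]].

Definition lmd (n : nat) : nat :=
  find (fun m => [exists W : {set SV n}, local_resolving W && (#|W| == m)])
       (iota 0 #|{: SV n}|.+1).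

Definition local_metric_basis (n : nat) (W : {set SV n}) : bool :=
  local_resolving W && (#|W| == lmd n).

From mathcomp Require Import all_boot ssrint zify.
Import IntDist.

Set Implicit Arguments.
Unset Strict Implicit.
Unset Printing Implicit Defensive.

(* The vertices a_0 b_0 a_1 b_1 ... a_(n-1) b_(n-1) form a cycle of length 2n,
   on which the edges of C_a and C_b are chords of length 2, while c_i and d_i
   hang below b_i at depth 1 and 2 and are joined along their own cycles.
   Hence d(u, v) = ceil(delta / 2) + |depth u - depth v|, where delta is the
   distance on the 2n-cycle between the positions ("rungs") of u and v.
   For vertices x, y on distinct cycles and n even, an explicit edge between
   depth-0 vertices (an a-b edge, or an a-edge when x and y sit at antipodal
   rungs) has its two ends at the same distance from x and from y, so {x, y}
   is never a local resolving set. *)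

Section CycleDistance.
Variable N : nat.

Definition cdist (p q : nat) := minn `|p - q| (N - `|p - q|).

Definition cstep (c p q : nat) := q = p + c \/ q + N = p + c.

Definition cadj (c p q : nat) := cstep c p q \/ cstep c q p.

Lemma cdist_refl p : cdist p p = 0.
Proof. by rewrite /cdist; lia. Qed.

Lemma cdist_cadj p q q' c : p < N -> q < N -> q' < N -> cadj c q q' ->
  cdist p q' <= cdist p q + c.
Proof. by rewrite /cdist /cadj /cstep; lia. Qed.

Lemma cdist_toward p q c : p < N -> q < N -> c <= cdist p q ->
  exists2 q', q' < N & cadj c q' q /\ cdist p q' + c = cdist p q.
Proof.
rewrite /cdist /cadj /cstep => ltpN ltqN lec.
have [lepq | ltqp] := leqP p q.
- case: (leqP (q - p) (N - (q - p))) => short; first by exists (q - c); lia.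
  by case: (ltnP (q + c) N) => wrap; [exists (q + c) | exists (q + c - N)]; lia.
- case: (leqP (p - q) (N - (p - q))) => short; first by exists (q + c); lia.
  by case: (leqP c q) => wrap; [exists (q - c) | exists (q + N - c)]; lia.
Qed.

Lemma odd_cdist p q : ~~ odd N -> p < N -> q < N -> odd (cdist p q) = odd (p + q).
Proof. by rewrite /cdist; lia. Qed.

Lemma exists_cshift p q : p < N -> q < N -> exists2 d, d < N & cstep d p q.
Proof. by rewrite /cstep; case: (leqP p q) => *; [exists (q - p) | exists (q + N - p)]; lia. Qed.

End CycleDistance.

Section EquidistantEdges.
Variable n : nat.
Hypothesis n_even : ~~ odd n.
Local Notation N := (2 * n).

(* The rungs of the ends of an edge between depth-0 vertices: consecutive on
   the 2n-cycle, or two a-vertices adjacent on C_a. *)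
Definition ab_edge (s s' : nat) := cadj N 1 s s' \/ ~~ odd s /\ cadj N 2 s s'.

Definition equidistant (p s s' : nat) := uphalf (cdist N s p) = uphalf (cdist N s' p).

Ltac solve_edge := rewrite /ab_edge /equidistant /cadj /cstep /cdist; split; lia.

Lemma equidistant_edge_even_odd p q : p < N -> q < N -> ~~ odd p -> odd q ->
  exists s s', [/\ s < N, s' < N, ab_edge s s', equidistant p s s' & equidistant q s s'].
Proof.
move=> ltpN ltqN ep oq; have [d ltdN qpd] := exists_cshift ltpN ltqN.
have [k nk] : exists k, n = 2 * k by exists n./2; lia.
have [a pa] : exists a, p = 2 * a by exists p./2; lia.
have [b qb] : exists b, q = 2 * b + 1 by exists q./2; lia.
move: n_even ep oq; rewrite /cstep qb pa nk in ltpN ltqN qpd * => _ _ _.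
(* s is the rung antipodal to p *)
have [s [ltsN ps]] : exists s, s < 4 * k /\ (s = 2 * a + 2 * k \/ s + 2 * k = 2 * a).
  by case: (ltnP a k) => ?; [exists (2 * a + 2 * k) | exists (2 * a - 2 * k)]; lia.
have [ltdn | lend] := ltnP d (2 * k); first by exists s, s.+1; solve_edge.
by case: (posnP s) => s0; [exists s, (4 * k).-1 | exists s, s.-1]; solve_edge.
Qed.

Lemma equidistant_edge_odd_odd p q : p < N -> q < N -> odd p -> odd q ->
  exists s s', [/\ s < N, s' < N, ab_edge s s', equidistant p s s' & equidistant q s s'].
Proof.
move=> ltpN ltqN op oq; have [d ltdN qpd] := exists_cshift ltpN ltqN.
have [k nk] : exists k, n = 2 * k by exists n./2; lia.
have [a pa] : exists a, p = 2 * a + 1 by exists p./2; lia.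
have [b qb] : exists b, q = 2 * b + 1 by exists q./2; lia.
move: n_even op oq; rewrite /cstep qb pa nk in ltpN ltqN qpd * => _ _ _.
have [ltdn | ltnd | eqdn] := ltngtP d (2 * k).
- by case: (posnP a) => a0; [exists 0, (4 * k).-1 | exists (2 * a), (2 * a).-1]; solve_edge.
- case: (ltnP (2 * a).+2 (4 * k)) => aN;
    [exists (2 * a).+2, (2 * a).+3 | exists 0, 1]; solve_edge.
- case: (ltnP (2 * a).+2 (4 * k)) => aN;
    [exists (2 * a), (2 * a).+2 | exists (2 * a), 0]; solve_edge.
Qed.

Lemma equidistant_edge p q : p < N -> q < N -> odd p || odd q ->
  exists s s', [/\ s < N, s' < N, ab_edge s s', equidistant p s s' & equidistant q s s'].
Proof.
move=> ltpN ltqN; case op: (odd p); case oq: (odd q) => // _.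
- exact: equidistant_edge_odd_odd ltpN ltqN op oq.
- have [s [s' [? ? ? ? ?]]] := equidistant_edge_even_odd ltqN ltpN (negbT oq) op.
  by exists s, s'.
- exact: equidistant_edge_even_odd ltpN ltqN (negbT op) oq.
Qed.

End EquidistantEdges.

Lemma eq_modS n i j : i < n -> j < n ->
  (j == i.+1 %% n) = (j == i.+1) || (i.+1 == n) && (j == 0).
Proof.
move=> lt_in lt_jn; case: (ltngtP i.+1 n) => [lt_Sin | | eq_Sin].
- by rewrite modn_small //; lia.
- lia.
- by rewrite eq_Sin modnn; lia.
Qed.

Lemma find_iota0 (P : pred nat) d M : d < M -> P d -> (forall i, i < d -> ~~ P i) ->
  find P (iota 0 M) = d.
Proof.
move=> ltdM Pd minP; case: findP => [/hasPn hasN | i lt_iM Pi before].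
  by have := hasN d; rewrite mem_iota add0n ltdM Pd => /(_ isT).
rewrite size_iota in lt_iM; have {}Pi : P i by have := Pi 0; rewrite nth_iota.
have [lt_id | lt_di | //] := ltngtP i d; first by rewrite (negbTE (minP _ lt_id)) in Pi.
by have := before 0 d lt_di; rewrite nth_iota ?Pd // (ltn_trans lt_di).
Qed.

Section Distance.
Variable n : nat.
Hypothesis n_gt0 : 0 < n.
Local Notation V := (SV n).

(* a_i, b_i, c_i, d_i have rungs 2i, 2i+1, 2i+1, 2i+1 and depths 0, 0, 1, 2. *)
Definition rung (v : V) : nat := 2 * v.2 + minn v.1 1.

Definition depth (v : V) : nat := v.1 - 1.

Definition rd_dist (u v : V) : nat :=
  uphalf (cdist (2 * n) (rung u) (rung v)) + `|depth u - depth v|.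

Lemma rung_lt v : rung v < 2 * n.
Proof. by rewrite /rung; have := ltn_ord v.2; lia. Qed.

Lemma odd_rung v : odd (rung v) = (0 < v.1).
Proof. by rewrite /rung; lia. Qed.

Lemma SadjE (u v : V) : Sadj u v <->
  (u.1 : nat) = v.1 /\ cadj (2 * n) 2 (rung u) (rung v)
  \/ (u.1 <= 1 /\ v.1 <= 1) /\ cadj (2 * n) 1 (rung u) (rung v)
  \/ (u.2 : nat) = v.2 /\ 0 < minn u.1 v.1 /\ `|u.1 - v.1| = 1.
Proof.
case: u v => [lu iu] [lv iv]; rewrite /Sadj /Sedge /rung /cadj /cstep /=.
rewrite -!val_eqE /= !eq_modS //.
have := ltn_ord iu; have := ltn_ord iv.
move: (nat_of_ord iu) (nat_of_ord iv) => i j lt_in lt_jn.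
by case: lu => [[|[|[|[|?]]]] ?] //; case: lv => [[|[|[|[|?]]]] ?] //=; split; lia.
Qed.

Definition vert (l i : nat) : V := (inord l, Ordinal (ltn_pmod i n_gt0)).

Lemma vert_letter l i : l < 4 -> (vert l i).1 = l :> nat.
Proof. exact: inordK. Qed.

Lemma vert_index l i : i < n -> (vert l i).2 = i :> nat.
Proof. exact: modn_small. Qed.

Lemma rung_vert l i : l < 4 -> i < n -> rung (vert l i) = 2 * i + minn l 1.
Proof. by move=> lt_l4 lt_in; rewrite /rung vert_letter ?vert_index. Qed.

Lemma depth_vert l i : l < 4 -> depth (vert l i) = l - 1.
Proof. by move=> lt_l4; rewrite /depth vert_letter. Qed.

Definition ab_vert (s : nat) : V := vert (odd s) s./2.

Lemma ab_vert_letter s : (ab_vert s).1 = odd s :> nat.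
Proof. by rewrite vert_letter //; case: odd. Qed.

Lemma depth_ab_vert s : depth (ab_vert s) = 0.
Proof. by rewrite /depth ab_vert_letter; case: odd. Qed.

Lemma rung_ab_vert s : s < 2 * n -> rung (ab_vert s) = s.
Proof. by move=> lt_sN; rewrite /rung ab_vert_letter vert_index; lia. Qed.

Lemma rd_dist_adj (u v w : V) : Sadj v w -> rd_dist u w <= (rd_dist u v).+1.
Proof.
have := rung_lt w; have := rung_lt v; have := rung_lt u.
rewrite /rd_dist /depth => ltu ltv ltw /SadjE.
case=> [[e_vw vw] | [[[lev lew] vw] | [ei [pos dvw]]]].
- by have := cdist_cadj ltu ltv ltw vw; lia.
- by have := cdist_cadj ltu ltv ltw vw; lia.
- have -> : rung w = rung v by rewrite /rung; lia.
  lia.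
Qed.

Lemma vertical_neighbour (v : V) l : l < 4 -> 0 < minn l v.1 -> `|l - v.1| = 1 ->
  Sadj (vert l v.2) v /\ rung (vert l v.2) = rung v.
Proof.
move=> lt_l4 pos d1; split; first by apply/SadjE; right; right; rewrite vert_letter ?vert_index.
by rewrite rung_vert // /rung; lia.
Qed.

Lemma cycle_neighbour_toward (u v : V) : 2 <= cdist (2 * n) (rung u) (rung v) ->
  exists2 w, Sadj w v &
    depth w = depth v /\ cdist (2 * n) (rung u) (rung w) + 2 = cdist (2 * n) (rung u) (rung v).
Proof.
move=> le2; have [q lt_qN [qv dq]] := cdist_toward (rung_lt u) (rung_lt v) le2.
have lt_v4 := ltn_ord v.1.
have rq : rung (vert v.1 q./2) = q.
  by rewrite rung_vert //; [have := odd_rung v; move: qv; rewrite /cadj /cstep; lia | lia].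
exists (vert v.1 q./2); last by rewrite rq depth_vert.
by apply/SadjE; left; rewrite rq vert_letter.
Qed.

Lemma ab_neighbour_toward (u v : V) : v.1 <= 1 -> cdist (2 * n) (rung u) (rung v) = 1 ->
  Sadj (ab_vert (rung u)) v.
Proof.
move=> le_v1 c1; have := rung_lt u; have := rung_lt v => ltv ltu.
apply/SadjE; right; left; rewrite rung_ab_vert // ab_vert_letter.
by move: c1; rewrite /cdist /cadj /cstep; case: odd; lia.
Qed.

Lemma horizontal_descent (u v : V) m : rd_dist u v = m.+1 ->
  depth u = depth v \/ v.1 = 0 :> nat -> exists2 w, Sadj w v & rd_dist u w = m.
Proof.
rewrite /rd_dist => duv hd; have ltu := rung_lt u; have ltv := rung_lt v.
have [c0 | [c1 | c2]] : cdist (2 * n) (rung u) (rung v) = 0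
  \/ cdist (2 * n) (rung u) (rung v) = 1 \/ 2 <= cdist (2 * n) (rung u) (rung v) by lia.
- have ruv : rung u = rung v by move: c0; rewrite /cdist; lia.
  by move: (odd_rung u) (odd_rung v) duv hd; rewrite c0 ruv /depth => ->; lia.
- have lev : v.1 <= 1.
    have evenN : ~~ odd (2 * n) by rewrite oddM.
    move: (odd_cdist evenN ltu ltv) (odd_rung u) (odd_rung v) hd.
    by rewrite c1 /depth; lia.
  exists (ab_vert (rung u)); first exact: ab_neighbour_toward.
  by move: duv; rewrite /rd_dist depth_ab_vert rung_ab_vert // cdist_refl c1 /depth; lia.
- have [w wv [dw cw]] := cycle_neighbour_toward c2.
  by exists w => //; move: duv; rewrite /rd_dist dw; lia.
Qed.

Lemma rd_dist_descent (u v : V) m : rd_dist u v = m.+1 -> exists2 w, Sadj w v & rd_dist u w = m.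
Proof.
move=> duv; have lt_u4 := ltn_ord u.1; have lt_v4 := ltn_ord v.1.
have vertical l : l < 4 -> 0 < minn l v.1 -> `|l - v.1| = 1 ->
    `|depth u - (l - 1)|.+1 = `|depth u - depth v| -> exists2 w, Sadj w v & rd_dist u w = m.
  move=> lt_l4 pos d1 closer; have [wv rw] := vertical_neighbour lt_l4 pos d1.
  by exists (vert l v.2) => //; move: duv; rewrite /rd_dist rw depth_vert //; lia.
have [deeper | shallower | level] := ltngtP (depth u) (depth v).
- by apply: (vertical v.1.-1); move: deeper; rewrite /depth; lia.
- have [v0 | vpos] := posnP v.1; first exact: horizontal_descent duv (or_intror v0).
  by apply: (vertical v.1.+1); move: shallower; rewrite /depth; lia.
- exact: horizontal_descent duv (or_introl level).
Qed.

Lemma rd_dist_eq0 (u v : V) : rd_dist u v = 0 -> u = v.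
Proof.
case: u v => [lu iu] [lv iv]; rewrite /rd_dist /rung /depth /cdist /=.
have := ltn_ord lu; have := ltn_ord lv; have := ltn_ord iu; have := ltn_ord iv.
by move=> *; congr (_, _); apply/val_inj => /=; lia.
Qed.

Lemma walk_rd_dist_le k (u v : V) : walk k u v -> rd_dist u v <= k.
Proof.
elim: k v => [|k IHk] v /=; first by move/eqP <-; rewrite /rd_dist cdist_refl; lia.
case/existsP => w /andP[uw wv].
by have := rd_dist_adj u wv; have := IHk w uw; lia.
Qed.

Lemma walk_rd_dist m (u v : V) : rd_dist u v = m -> walk m u v.
Proof.
elim: m v => [|m IHm] v duv /=; first by rewrite (rd_dist_eq0 duv).
have [w wv uw] := rd_dist_descent duv.
by apply/existsP; exists w; rewrite (IHm w uw) wv.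
Qed.

Lemma SdistE (u v : V) : Sdist u v = rd_dist u v.
Proof.
apply: find_iota0; last 2 first.
- exact: walk_rd_dist.
- by move=> i lt_i; apply/negP => /walk_rd_dist_le; lia.
rewrite card_prod !card_ord /rd_dist /depth /cdist.
by have := ltn_ord u.1; have := ltn_ord v.1; lia.
Qed.

Lemma Sdist_ab_vert s (x : V) : s < 2 * n ->
  Sdist (ab_vert s) x = uphalf (cdist (2 * n) s (rung x)) + depth x.
Proof. by move=> lt_sN; rewrite SdistE /rd_dist rung_ab_vert // depth_ab_vert; lia. Qed.

Lemma not_local_resolving_two_cycles (x y : V) : ~~ odd n -> x.1 != y.1 ->
  ~~ local_resolving [set x; y].
Proof.
move=> n_even xy.
have pq : odd (rung x) || odd (rung y) by move: xy; rewrite !odd_rung -val_eqE /=; lia.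
have [s [s' [ltsN lts'N ss' eqx eqy]]] := equidistant_edge n_even (rung_lt x) (rung_lt y) pq.
have adj : Sadj (ab_vert s) (ab_vert s').
  apply/SadjE; rewrite !ab_vert_letter !rung_ab_vert //.
  case: ss' => [ss' | [es ss']]; [right; left | left]; move: ss'; rewrite /cadj /cstep; lia.
apply/negP => /forallP/(_ (ab_vert s))/forallP/(_ (ab_vert s'))/implyP/(_ adj)/existsP[w /andP[]].
move: eqx eqy; rewrite /equidistant /resolves !inE => eqx eqy.
by case/orP => /eqP ->; rewrite !Sdist_ab_vert // ?eqx ?eqy eqxx.
Qed.

End Distance.

Theorem lemma3p4 (k : nat) (hk : 2 <= k) (hl : lmd (2 * k) = 2) :
  forall W : {set SV (2 * k)}, local_metric_basis W ->
    ~ (exists x y : SV (2 * k), W = [set x; y] /\ x.1 != y.1).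
Proof.
move=> W /andP[resW _] [x [y [defW xy]]].
have n_gt0 : 0 < 2 * k by lia.
have n_even : ~~ odd (2 * k) by rewrite oddM.
by have := not_local_resolving_two_cycles n_gt0 n_even xy; rewrite -defW resW.
Qed.
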